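(* Let $p$ be a prime, $R$ a Noetherian $\mathbb{F}_p$-algebra and $(\sigma,\delta)$ a skew derivation on $R$ with $\sigma\delta=\delta\sigma$. If $i,j,k,n\in\mathbb{N}$ satisfy $[i]+[j]+[k]=[n]$, then $i+j+k=n$. Furthermore, for any $a,b,x\in R$ and $n\in\mathbb{N}$, there exist $\alpha_{i,j,k}\in\mathbb{F}_p^\times$ such that $$\delta^n(axb)=\sum_{[i]+[j]+[k]=[n]}\alpha_{i,j,k}\,\delta^i\sigma^{n-i}(a)\,\delta^j\sigma^k(x)\,\delta^k(b).$$
   Context: A skew derivation is a pair $(\sigma,\delta)$ with $\sigma$ an automorphism and $\delta(ab)=\delta(a)b+\sigma(a)\delta(b)$; composition is written as concatenation. For $n\in\mathbb{N}$ with base-$p$ expansion $n=a_0+a_1p+\cdots+a_rp^r$ ($0\le a_i<p$), $[n]=[n]_p$ denotes the sequence $(a_0,a_1,\dots)\in\mathbb{N}^\infty$ with $a_i=0$ for $i>r$; sums $[i]+[j]+[k]$ are taken componentwise, and the sum in the formula runs over all triples $(i,j,k)$ with $[i]+[j]+[k]=[n]$. *)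

From HB Require Import structures.
From mathcomp Require Import all_boot all_order all_algebra.
From mathcomp Require Import zify.
Set Implicit Arguments. Unset Strict Implicit. Unset Printing Implicit Defensive.
Import Order.TTheory GRing.Theory Num.Theory.

Local Open Scope ring_scope.

Definition left_ideal (R : pzRingType) (I : R -> Prop) : Prop :=
  [/\ I 0, (forall x y, I x -> I y -> I (x + y)) & (forall r x, I x -> I (r * x))].

Definition right_ideal (R : pzRingType) (I : R -> Prop) : Prop :=
  [/\ I 0, (forall x y, I x -> I y -> I (x + y)) & (forall r x, I x -> I (x * r))].

Definition acc_on (R : Type) (C : (R -> Prop) -> Prop) : Prop :=
  forall I : nat -> R -> Prop,
    (forall m, C (I m)) ->
    (forall m x, I m x -> I m.+1 x) ->
    exists N, forall m, (N <= m)%N -> forall x, I m x <-> I N x.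

Definition noetherian (R : pzRingType) : Prop :=
  acc_on (@left_ideal R) /\ acc_on (@right_ideal R).

Definition skew_derivation (R : pzRingType) (sigma delta : R -> R) : Prop :=
  [/\ (forall x y, sigma (x + y) = sigma x + sigma y),
      (forall x y, sigma (x * y) = sigma x * sigma y),
      sigma 1 = 1 & bijective sigma] /\
  ((forall x y, delta (x + y) = delta x + delta y) /\
   (forall x y, delta (x * y) = delta x * y + sigma x * delta y)).

Local Close Scope ring_scope.

Definition digit (p n t : nat) : nat := (n %/ p ^ t) %% p.

(* [i] + [j] + [k] = [n] componentwise, as sequences in N^infinity *)
Definition digits_add (p i j k n : nat) : Prop :=
  forall t, digit p i t + digit p j t + digit p k t = digit p n t.

(* boolean decision of digits_add (only digits below i+j+k+n+1 can be nonzero) *)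
Definition digits_addb (p i j k n : nat) : bool :=
  all (fun t => digit p i t + digit p j t + digit p k t == digit p n t)
      (iota 0 (i + j + k + n).+1).

Lemma digit_big (p m t : nat) : 1 < p -> m <= t -> digit p m t = 0.
Proof.
move=> p1 mt; rewrite /digit divn_small ?mod0n //.
exact: leq_ltn_trans mt (ltn_expl t p1).
Qed.

Lemma digits_addP (p i j k n : nat) : 1 < p ->
  reflect (digits_add p i j k n) (digits_addb p i j k n).
Proof.
move=> p1; apply: (iffP allP) => [H t|H t _]; last exact/eqP.
case: (ltnP t (i + j + k + n).+1) => ht.
  by apply/eqP/H; rewrite mem_iota.
by rewrite !digit_big //; apply: leq_trans ht; lia.
Qed.

From mathcomp Require Import all_boot all_algebra zify ring.
Import GRing.Theory.
Set Implicit Arguments. Unset Strict Implicit. Unset Printing Implicit Defensive.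

(* [[i] + [j] + [k] = [n]] says that i + j + k = n with no carry in base p.
   Iterating the twisted Leibniz rule expands delta^n (a x b) over all i + j + k = n,
   with the multinomial coefficient n! / (i! j! k!) in front of the displayed monomial.
   By Legendre's formula the p-adic valuation of that coefficient is the number of
   carries in the base-p addition i + j + k (Kummer), so modulo p exactly the
   carry-free triples survive, each with a nonzero coefficient in F_p. *)

Section Digits.
Variable p : nat.
Hypothesis p_gt1 : 1 < p.

Let expp_gt0 t : 0 < p ^ t.
Proof. by rewrite expn_gt0 ltnW. Qed.

Lemma modn_expS x t : x %% p ^ t.+1 = x %% p ^ t + digit p x t * p ^ t.
Proof.
rewrite {1}(divn_eq (x %% p ^ t.+1) (p ^ t)) /digit modn_divl -expnS addnC.
by rewrite modn_dvdm // dvdn_exp2l.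
Qed.

Definition trunc_sum i j k t := i %% p ^ t + j %% p ^ t + k %% p ^ t.

Lemma trunc_sum_mod i j k t : trunc_sum i j k t = i + j + k %[mod p ^ t].
Proof. by rewrite /trunc_sum -[in RHS]modnDm -[in RHS](modnDm i) modnDml. Qed.

Lemma digits_addE i j k n :
  digits_add p i j k n <-> forall t, trunc_sum i j k t = n %% p ^ t.
Proof.
rewrite /trunc_sum; split=> [dijk | Etrunc t].
  elim=> [|t IH]; first by rewrite !modn1.
  by rewrite !modn_expS -(dijk t) -IH; ring.
apply/eqP; rewrite -(eqn_pmul2r (expp_gt0 t)); apply/eqP/(@addnI (n %% p ^ t)).
by rewrite -modn_expS -(Etrunc t.+1) -(Etrunc t) /trunc_sum !modn_expS; ring.
Qed.

Lemma digits_add_sum i j k n : digits_add p i j k n -> i + j + k = n.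
Proof.
set N := i + j + k + n.
have small m : m <= N -> m %% p ^ N = m.
  by move=> m_le; rewrite modn_small // (leq_ltn_trans m_le) // ltn_expl.
move/digits_addE/(_ N); rewrite /trunc_sum !small //; lia.
Qed.

Lemma carry_freeP i j k :
  digits_add p i j k (i + j + k) <-> forall t, trunc_sum i j k t < p ^ t.
Proof.
rewrite digits_addE; split=> carry t; first by rewrite carry ltn_pmod.
by rewrite -trunc_sum_mod modn_small.
Qed.

End Digits.

Definition multinom i j k := 'C(i + j + k, i) * 'C(j + k, j).

Lemma multinom_gt0 i j k : 0 < multinom i j k.
Proof. by rewrite muln_gt0 !bin_gt0 -addnA !leq_addr. Qed.

Lemma multinom_fact i j k : multinom i j k * (i`! * j`! * k`!) = (i + j + k)`!.
Proof.
have := bin_fact (leq_addr (j + k) i); have := bin_fact (leq_addr k j).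
rewrite !addKn addnA /multinom => <- <-; ring.
Qed.

Lemma divnD3 i j k d : 0 < d ->
  (i + j + k) %/ d = i %/ d + j %/ d + k %/ d + (i %% d + j %% d + k %% d) %/ d.
Proof.
move=> d_gt0; rewrite {1}(divn_eq i d) {1}(divn_eq j d) {1}(divn_eq k d).
have -> : i %/ d * d + i %% d + (j %/ d * d + j %% d) + (k %/ d * d + k %% d)
  = (i %% d + j %% d + k %% d) + (i %/ d + j %/ d + k %/ d) * d by lia.
by rewrite divnDMl // addnC.
Qed.

Lemma logn_fact_le p m N : prime p -> m <= N ->
  logn p m`! = \sum_(1 <= t < N.+1) m %/ p ^ t.
Proof.
move=> p_pr le_mN; rewrite logn_fact // [RHS](big_cat_nat _ (n := m.+1)) //=.
rewrite [X in _ + X]big_nat_cond [X in _ + X]big1 ?addn0 // => t.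
case/andP=> /andP[lt_mt _] _.
by rewrite divn_small // (leq_trans lt_mt) // ltnW // ltn_expl // prime_gt1.
Qed.

Section Kummer.
Variable p : nat.
Hypothesis p_pr : prime p.

Let p_gt1 : 1 < p := prime_gt1 p_pr.

(* Legendre's formula: the valuation counts the carries. *)
Lemma logn_multinom i j k : logn p (multinom i j k) =
  \sum_(1 <= t < (i + j + k).+1) trunc_sum p i j k t %/ p ^ t.
Proof.
apply: (@addIn (logn p (i`! * j`! * k`!))).
rewrite -lognM ?multinom_gt0 ?muln_gt0 ?fact_gt0 // multinom_fact.
rewrite !lognM ?muln_gt0 ?fact_gt0 // !(@logn_fact_le p _ (i + j + k)) //; try lia.
rewrite -!big_split; apply: eq_bigr => t _.
by rewrite divnD3 ?expn_gt0 ?prime_gt0 // addnC.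
Qed.

Lemma multinom_coprimeP i j k :
  reflect (digits_add p i j k (i + j + k)) (~~ (p %| multinom i j k)).
Proof.
have -> : (p %| multinom i j k) = (0 < logn p (multinom i j k)).
  by rewrite logn_gt0 mem_primes p_pr multinom_gt0.
rewrite -eqn0Ngt logn_multinom sum_nat_seq_eq0.
apply: (iffP allP) => [trunc0 | /(carry_freeP p_gt1) carry t _]; last first.
  by rewrite divn_small ?carry.
apply/(carry_freeP p_gt1) => t; case: (posnP t) => [-> | t_gt0].
  by rewrite /trunc_sum !modn1.
case: (leqP t (i + j + k)) => [le_tN | lt_Nt].
  have := trunc0 t; rewrite mem_index_iota t_gt0 ltnS le_tN => /(_ isT).
  by rewrite eqn0Ngt divn_gt0 ?expn_gt0 ?prime_gt0 // -ltnNge.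
rewrite (leq_ltn_trans _ (ltn_expl t p_gt1)) // (leq_trans _ (ltnW lt_Nt)) //.
by rewrite /trunc_sum !leq_add ?leq_mod.
Qed.

End Kummer.

Local Open Scope ring_scope.

Lemma sumr_pascal (V : nmodType) (T : nat -> V) n :
  \sum_(m < n.+1) T m *+ 'C(n, m) + \sum_(m < n.+1) T m.+1 *+ 'C(n, m) =
  \sum_(m < n.+2) T m *+ 'C(n.+1, m).
Proof.
rewrite [RHS]big_ord_recl [X in X + _]big_ord_recl !bin0 -addrA; congr (_ + _).
pose U (m : 'I_n.+1) := T m.+1 *+ 'C(n, m.+1) + T m.+1 *+ 'C(n, m).
rewrite [RHS](eq_bigr U) => [|m _]; last by rewrite lift0 binS mulrnDr.
rewrite big_split /= [X in _ = X + _]big_ord_recr /= bin_small // mulr0n addr0.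
by congr (_ + _); apply: eq_bigr => m _; rewrite lift0.
Qed.

Lemma sum_ord_addn_eq (V : nmodType) (F : nat -> V) n s :
  \sum_(k < n.+1 | (s + k == n)%N) F k = if (s <= n)%N then F (n - s)%N else 0.
Proof.
case: leqP => [le_sn | lt_ns].
  rewrite (big_pred1 (inord (n - s))) ?inordK ?ltnS ?leq_subr // => k /=.
  by rewrite -(inj_eq val_inj) /= inordK ?ltnS ?leq_subr //; apply/eqP/eqP; lia.
by rewrite big_pred0 // => k; apply/eqP; lia.
Qed.

Lemma sum_simplex (V : nmodType) (G : nat -> nat -> nat -> V) n :
  \sum_(i < n.+1) \sum_(j < n.+1) \sum_(k < n.+1 | (i + j + k == n)%N) G i j k =
  \sum_(i < n.+1) \sum_(j < (n - i).+1) G i j (n - i - j)%N.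
Proof.
apply: eq_bigr => i _.
have le_ni_n : ((n - i).+1 <= n.+1)%N by rewrite ltnS leq_subr.
rewrite (big_ord_widen n.+1 (fun j => G i j (n - i - j)%N) le_ni_n) [RHS]big_mkcond.
apply: eq_bigr => j _.
by rewrite sum_ord_addn_eq subnDA ltnS leq_subRL // -ltnS.
Qed.

Section SkewLeibniz.
Variables (R : pzRingType) (sigma delta : R -> R).
Hypotheses (deltaD : forall x y, delta (x + y) = delta x + delta y)
  (deltaM : forall x y, delta (x * y) = delta x * y + sigma x * delta y)
  (sigma_delta : forall x, sigma (delta x) = delta (sigma x)).

Let delta0 : delta 0 = 0.
Proof. by apply: (addrI (delta 0)); rewrite -deltaD !addr0. Qed.

Let deltaMn x m : delta (x *+ m) = delta x *+ m.
Proof. by elim: m => [|m IH]; rewrite ?mulr0n ?delta0 // !mulrS deltaD IH. Qed.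

Lemma sigma_iter_delta m x : sigma (iter m delta x) = iter m delta (sigma x).
Proof. by elim: m => //= m IH; rewrite sigma_delta IH. Qed.

Lemma iter_deltaM n a b : iter n delta (a * b) =
  \sum_(i < n.+1) (iter i delta (iter (n - i) sigma a) * iter (n - i) delta b) *+ 'C(n, i).
Proof.
elim: n => [|n IH]; first by rewrite big_ord1 /= mulr1n.
pose T i := iter i delta (iter (n.+1 - i) sigma a) * iter (n.+1 - i) delta b.
rewrite iterS IH (big_morph delta deltaD delta0) -(sumr_pascal T) addrC.
under eq_bigr => i _ do rewrite deltaMn deltaM mulrnDl.
rewrite big_split /=; congr (_ + _); apply: eq_bigr => i _; rewrite /T.
  by rewrite subSn ?sigma_iter_delta // -ltnS.
Qed.

Lemma iter_deltaM3 n a x b : iter n delta (a * x * b) =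
  \sum_(i < n.+1) \sum_(j < n.+1) \sum_(k < n.+1 | (i + j + k == n)%N)
    (multinom i j k)%:R * iter i delta (iter (n - i) sigma a)
      * iter j delta (iter k sigma x) * iter k delta b.
Proof.
pose G i j k := (multinom i j k)%:R * iter i delta (iter (n - i) sigma a)
  * iter j delta (iter k sigma x) * iter k delta b.
rewrite (sum_simplex G) -mulrA iter_deltaM; apply: eq_bigr => i _.
rewrite iter_deltaM mulr_sumr -sumrMnl; apply: eq_bigr => j _; rewrite /G.
have le_in : (i <= n)%N by rewrite -ltnS.
have le_jni : (j <= n - i)%N by rewrite -ltnS.
have -> : multinom i j (n - i - j) = ('C(n, i) * 'C(n - i, j))%N.
  by rewrite /multinom -addnA subnKC // subnKC.
by rewrite -!mulrA mulr_natl mulrnAr -mulrnA mulnC.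
Qed.

End SkewLeibniz.

Lemma natr_modn (R : pzSemiRingType) p m : p%:R = 0 :> R -> (m %% p)%:R = m%:R :> R.
Proof. by move=> p0; rewrite {2}(divn_eq m p) natrD natrM p0 mulr0 add0r. Qed.

Local Close Scope ring_scope.

Theorem lemma3p2p2 (p : nat) (R : pzRingType) (sigma delta : R -> R) :
  prime p -> (p%:R : R)%R = 0%R -> noetherian R ->
  skew_derivation sigma delta ->
  (forall x, sigma (delta x) = delta (sigma x)) ->
  (forall i j k n : nat, digits_add p i j k n -> i + j + k = n) /\
  (forall (n : nat) (a b x : R),
     exists alpha : nat -> nat -> nat -> 'F_p,
       (forall i j k : nat, digits_add p i j k n -> alpha i j k != 0%R) /\
       iter n delta (a * x * b)%R =
       (\sum_(i < n.+1) \sum_(j < n.+1) \sum_(k < n.+1 | digits_addb p i j k n)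
          (nat_of_ord (alpha i j k))%:R
          * iter i delta (iter (n - i)%N sigma a)
          * iter j delta (iter k sigma x)
          * iter k delta b)%R).
Proof.
move=> p_pr p0 _ [_ [deltaD deltaM]] sigma_delta.
have p_gt1 := prime_gt1 p_pr.
split=> [i j k n|n a b x]; first exact: digits_add_sum.
exists (fun i j k => (multinom i j k)%:R%R); split.
  move=> i j k dijk; rewrite -(dvdn_pcharf (pchar_Fp p_pr)).
  by have := dijk; rewrite -(digits_add_sum p_gt1 dijk) => /(multinom_coprimeP p_pr).
rewrite (iter_deltaM3 deltaD deltaM sigma_delta).
apply: eq_bigr => i _; apply: eq_bigr => j _.
rewrite big_mkcond [RHS]big_mkcond; apply: eq_bigr => k _.
rewrite val_Fp_nat // natr_modn //.
case: (digits_addP i j k n p_gt1) => [dijk | ndijk].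
  by rewrite (digits_add_sum p_gt1 dijk) eqxx.
case: eqP => // Eijk; rewrite -(natr_modn _ p0).
suff /eqP -> : (p %| multinom i j k)%N by rewrite !mul0r.
by apply/negPn/negP => /(multinom_coprimeP p_pr); rewrite Eijk.
Qed.
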